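(* Let $A \subset \mathbb{Z}^d$ be a finite set such that $A - A$ generates $\mathbb{Z}^d$ additively and its convex hull $\Delta_A$ is a $d$-dimensional simplex with vertices $v_1, \ldots, v_{d+1}$. Let $\widetilde{v} = (v,1) \in \mathbb{Z}^{d+1}$ denote the lift of $v \in \mathbb{Z}^d$, let $\mathcal{C}_A = \{\sum_{a \in A} n_a \widetilde{a} : n_a \in \mathbb{N}\}$, let $\Lambda = \mathrm{span}_{\mathbb{Z}}\{\widetilde{v}_1, \ldots, \widetilde{v}_{d+1}\}$, and for $\pi \in \mathbb{Z}^{d+1}$ let $\mathcal{S}_\pi$ be the set of elements of $\mathcal{C}_A$ congruent to $\pi$ modulo $\Lambda$. Call $(g, N) \in \mathcal{S}_\pi$ (with $g \in \mathbb{Z}^d$, $N \in \mathbb{N}$) a minimal element of $\mathcal{S}_\pi$ if $(g,N) - \widetilde{v}_i \notin \mathcal{C}_A$ for every $i = 1, \ldots, d+1$. Then every minimal element $(\alpha, M)$ of $\mathcal{S}_\pi$ satisfies \[ M \leq \mathrm{vol}(\Delta_A)\cdot d! - 1 . \] In particular, $\mathcal{S}_\pi$ has finitely many minimal elements.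
   Context: $\mathbb{N} = \{0,1,2,\ldots\}$. For a point $(g,N) \in \mathbb{Z}^d \times \mathbb{Z}$ the last coordinate $N$ is called its height. $\mathrm{vol}(\Delta_A)$ is the $d$-dimensional volume of the convex hull of $A$. *)

From HB Require Import structures.
From mathcomp Require Import all_boot all_order all_algebra.
Set Implicit Arguments. Unset Strict Implicit. Unset Printing Implicit Defensive.
Import Order.TTheory GRing.Theory Num.Theory.
Local Open Scope ring_scope.

(* Points of Z^d are row vectors 'rV[int]_d; points of Z^(d+1) are pairs
   (g, N) : 'rV[int]_d * int, N being the height (last coordinate).
   The finite set A is given as a sequence of points (duplicates harmless). *)

Definition pt (d : nat) := ('rV[int]_d * int)%type.

Definition lift_pt (d : nat) (v : 'rV[int]_d) : pt d := (v, 1).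

Definition in_cone (d : nat) (A : seq 'rV[int]_d) (p : pt d) : Prop :=
  exists n : 'I_(size A) -> nat,
    p.1 = \sum_(i < size A) (n i)%:Z *: A`_i /\
    p.2 = \sum_(i < size A) (n i)%:Z.

Definition in_lattice (d : nat) (v : 'I_d.+1 -> 'rV[int]_d) (p : pt d) : Prop :=
  exists c : 'I_d.+1 -> int,
    p.1 = \sum_(i < d.+1) c i *: v i /\
    p.2 = \sum_(i < d.+1) c i.

Definition pt_sub (d : nat) (p q : pt d) : pt d := (p.1 - q.1, p.2 - q.2).

Definition in_S (d : nat) (A : seq 'rV[int]_d) (v : 'I_d.+1 -> 'rV[int]_d)
  (pi p : pt d) : Prop :=
  in_cone A p /\ in_lattice v (pt_sub p pi).

Definition minimal_S (d : nat) (A : seq 'rV[int]_d) (v : 'I_d.+1 -> 'rV[int]_d)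
  (pi p : pt d) : Prop :=
  in_S A v pi p /\ forall i : 'I_d.+1, ~ in_cone A (pt_sub p (lift_pt (v i))).

Definition diff_generates (d : nat) (A : seq 'rV[int]_d) : Prop :=
  forall z : 'rV[int]_d, exists c : 'I_(size A) -> 'I_(size A) -> int,
    z = \sum_(i < size A) \sum_(j < size A) c i j *: (A`_i - A`_j).

(* (d+1)x(d+1) integer matrix whose i-th row is the lift (v_i, 1) *)
Definition lift_mx (d : nat) (v : 'I_d.+1 -> 'rV[int]_d) : 'M[int]_d.+1 :=
  \matrix_(i, j) match unlift ord_max j with
                 | Some k => v i 0 k
                 | None => 1
                 end.

Definition affinely_independent (d : nat) (v : 'I_d.+1 -> 'rV[int]_d) : Prop :=
  \det (lift_mx v) != 0.

Definition ratv (d : nat) (a : 'rV[int]_d) : 'rV[rat]_d :=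
  map_mx (fun x : int => x%:~R) a.

Definition in_hull (d : nat) (v : 'I_d.+1 -> 'rV[int]_d) (a : 'rV[int]_d) : Prop :=
  exists lam : 'I_d.+1 -> rat,
    (forall i, 0 <= lam i) /\ \sum_(i < d.+1) lam i = 1 /\
    ratv a = \sum_(i < d.+1) lam i *: ratv (v i).

Definition hull_is_simplex (d : nat) (A : seq 'rV[int]_d)
  (v : 'I_d.+1 -> 'rV[int]_d) : Prop :=
  affinely_independent v /\ (forall i, v i \in A) /\
  (forall a, a \in A -> in_hull v a).

(* vol(conv{v_i}) * d!  (normalized volume of a lattice simplex) *)
Definition normalized_volume (d : nat) (v : 'I_d.+1 -> 'rV[int]_d) : int :=
  `|\det (lift_mx v)|.

From mathcomp Require Import all_boot all_order all_algebra.
Set Implicit Arguments. Unset Strict Implicit. Unset Printing Implicit Defensive.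
Import Order.TTheory GRing.Theory Num.Theory.
Local Open Scope ring_scope.

(* A cone point of height M is the sum of the lifts of a word a_1 ... a_M over
   A.  The lattice Lambda has index |det (lift_mx v)| = vol(Delta_A) d! in
   Z^(d+1), so if M >= |det| two of the M + 1 prefix sums are congruent modulo
   Lambda: some nonempty factor of the word sums to sum_i c_i v~_i.  All its
   letters lie in the simplex, so uniqueness of barycentric coordinates gives
   c_i >= 0, and the c_i add up to the length of the factor, so some c_j > 0.
   Replacing the factor by c_i - [i = j] copies of each v_i shows that
   (alpha, M) - v~_j is still in C_A, contradicting minimality. *)

Lemma absz_unit (x : int) : x \is a GRing.unit -> `|x|%N = 1%N.
Proof. by rewrite -topredE /= /intUnitRing.unitz /= => /orP [] /eqP ->. Qed.

Lemma absz_det_unitmx n (P : 'M[int]_n) : P \in unitmx -> `|\det P|%N = 1%N.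
Proof. by rewrite unitmxE => /absz_unit. Qed.

Lemma int_Smith_diag n (L : 'M[int]_n) :
  exists P Q (ds : 'I_n -> int), [/\ P \in unitmx, Q \in unitmx,
    L = P *m diag_mx (\row_i ds i) *m Q & `|\det L|%N = (\prod_i `|ds i|)%N].
Proof.
have [P uP [Q uQ [ds _ defL]]] := int_Smith_normal_form L.
have {}defL : L = P *m diag_mx (\row_i ds`_i) *m Q.
  by rewrite defL; congr (_ *m _ *m _); apply/matrixP => i j; rewrite !mxE.
exists P, Q, (fun i => ds`_i); split => //.
rewrite defL !det_mulmx det_diag !abszM !absz_det_unitmx // mul1n muln1.
rewrite (big_morph absz abszM (erefl : absz 1 = 1%N)).
by apply: eq_bigr => i _; rewrite mxE.
Qed.

(* The residues of the coordinates of x (invmx Q) modulo the elementary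
   divisors of L separate the cosets of the row lattice of L, and there are
   |det L| of them. *)
Lemma row_lattice_pigeonhole n (L : 'M[int]_n) (T : finType)
    (f : T -> 'rV[int]_n) :
  \det L != 0 -> (`|\det L| < #|T|)%N ->
  exists j k, j != k /\ exists c, f k - f j = c *m L.
Proof.
move=> detL_neq0 card_gt.
have [P [Q [ds [uP uQ defL detLE]]]] := int_Smith_diag L.
have ds_neq0 i : ds i != 0.
  apply: contra detL_neq0 => /eqP ds0; rewrite -absz_eq0 detLE.
  by rewrite (bigD1 i) //= ds0.
pose y (x : 'rV[int]_n) := x *m invmx Q.
pose r x i := modz (y x 0 i) (ds i).
have residue_lt x i : (absz (r x i) < absz (ds i))%N.
  have := ltz_mod (y x 0 i) (ds_neq0 i).
  by rewrite -(gez0_abs (modz_ge0 _ (ds_neq0 i))) -!abszE ltz_nat.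
pose Residues := {dffun forall i, 'I_(absz (ds i))}.
pose F (k : T) : Residues := [ffun i => Ordinal (residue_lt (f k) i)].
have /injectivePn [j [k jk Fjk]] : ~~ injectiveb F.
  apply: contraL card_gt => /injectiveP /leq_card.
  rewrite card_dep_ffun foldrE big_map big_enum /= -leqNgt detLE.
  by under eq_bigr do rewrite card_ord.
exists j, k; split => //.
have dvd_ds i : (ds i %| (y (f k - f j) 0 i)%R)%Z.
  have /eqP := congr1 (fun g : Residues => val (g i)) Fjk.
  rewrite !ffunE -eqz_nat !gez0_abs ?modz_ge0 // => /eqP Er.
  rewrite /y mulmxBl mxE [X in (_ %| _ + X)%Z]mxE -eqz_mod_dvd.
  by rewrite /r in Er; rewrite Er.
exists (\row_i divz (y (f k - f j) 0 i) (ds i) *m invmx P).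
rewrite defL !mulmxA mulmxKV // mul_mx_diag.
rewrite -[LHS](mulmxKV uQ); congr (_ *m Q).
by apply/rowP => i; rewrite [RHS]mxE [X in X * _]mxE [X in _ * X]mxE divzK.
Qed.

Lemma long_seq_row_lattice_factor n (L : 'M[int]_n) (T : Type)
    (phi : T -> 'rV[int]_n) (s : seq T) :
  \det L != 0 -> (`|\det L| <= size s)%N ->
  exists s1 s2 s3 c, [/\ s = s1 ++ s2 ++ s3, (0 < size s2)%N &
    \sum_(a <- s2) phi a = c *m L].
Proof.
move=> detL_neq0 long.
pose f (k : 'I_(size s).+1) := \sum_(a <- take k s) phi a.
have [j [k [jk [c fkj]]]] : exists j k : 'I_(size s).+1,
    (j < k)%N /\ exists c, f k - f j = c *m L.
  have [|j [k [jk [c fkj]]]] := row_lattice_pigeonhole f detL_neq0.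
    by rewrite card_ord ltnS.
  case: (ltngtP j k) => [jk'|kj|/val_inj jk']; last by rewrite jk' eqxx in jk.
    by exists j, k; split; last exists c.
  by exists k, j; split; last (exists (- c); rewrite mulNmx -fkj opprB).
have take_k : take k s = take j s ++ drop j (take k s).
  by rewrite -{1}(cat_take_drop j (take k s)) take_takel // ltnW.
exists (take j s), (drop j (take k s)), (drop k s), c; split.
- by rewrite catA -take_k cat_take_drop.
- by rewrite size_drop size_takel ?subn_gt0 // -ltnS.
- by rewrite /f take_k big_cat /= addrAC subrr add0r in fkj.
Qed.

Definition mult_word (I : finType) (T : Type) (x : I -> T) (n : I -> nat) :=
  flatten [seq nseq (n i) (x i) | i <- enum I].

Lemma big_mult_word (V : nmodType) (I : finType) (T : Type) (x : I -> T)
    (n : I -> nat) (F : T -> V) :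
  \sum_(a <- mult_word x n) F a = \sum_i F (x i) *+ n i.
Proof.
rewrite big_flatten big_map big_enum /=.
by apply: eq_bigr => i _; rewrite big_nseq iter_addr_0.
Qed.

Lemma all_mult_word (I : finType) (T : eqType) (x : I -> T) (n : I -> nat)
    (S : {pred T}) :
  (forall i, x i \in S) -> all (mem S) (mult_word x n).
Proof.
move=> xS; apply/allP => _ /flattenP [_ /mapP [i _ ->] /nseqP [-> _]].
exact: xS.
Qed.

Section Cone.
Variable d : nat.

Definition word_pt (s : seq 'rV[int]_d) : pt d :=
  (\sum_(a <- s) a, (size s)%:Z).

Lemma word_pt_cat s t : word_pt (s ++ t) = word_pt s + word_pt t.
Proof. by rewrite /word_pt big_cat size_cat PoszD. Qed.

Lemma size_as_sum (s : seq 'rV[int]_d) : (size s)%:Z = \sum_(a <- s) 1.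
Proof. by rewrite -sum1_size -natz natr_sum. Qed.

Variable A : seq 'rV[int]_d.

Lemma sum_index_indicator (V : nmodType) x (F : 'rV[int]_d -> V) :
  x \in A -> \sum_(i < size A) F A`_i *+ (index x A == i) = F x.
Proof.
move=> xA; have ix : (index x A < size A)%N by rewrite index_mem.
rewrite (bigD1 (Ordinal ix)) //= eqxx mulr1n nth_index // big1 ?addr0 //.
by move=> i; rewrite -val_eqE /= eq_sym => /negbTE ->; rewrite mulr0n.
Qed.

Lemma in_coneP p : in_cone A p <-> exists2 s, all (mem A) s & p = word_pt s.
Proof.
split.
  case: p => p1 p2 [n [/= -> ->]].
  exists (mult_word (fun i : 'I_(size A) => A`_i) n).
    by apply: all_mult_word => i; rewrite mem_nth.
  rewrite /word_pt size_as_sum !big_mult_word; congr pair.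
    by apply: eq_bigr => i _; rewrite -scaler_nat natz.
  by apply: eq_bigr => i _; rewrite -natz -[RHS]mulr_natr mul1r natz.
move=> [s sA ->].
exists (fun i : 'I_(size A) => count (fun a => index a A == i) s) => /=.
elim: s sA => [_|x s IH] /=.
  by rewrite big_nil; split; symmetry; apply: big1 => i _; rewrite ?scale0r.
move=> /andP [xA /IH [IH1 IH2]]; split.
  rewrite big_cons IH1; under [RHS]eq_bigr do rewrite PoszD scalerDl.
  rewrite big_split /= -[X in X + _ = _](sum_index_indicator id xA).
  by congr (_ + _); apply: eq_bigr => i _; rewrite -natz scaler_nat.
rewrite -(addn1 (size s)) PoszD IH2 addrC.
under [RHS]eq_bigr do rewrite PoszD.
rewrite big_split /= -[X in X + _ = _](sum_index_indicator (fun=> 1 : int) xA).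
by congr (_ + _); apply: eq_bigr => i _; case: (_ == _).
Qed.

End Cone.

Section Rows.
Variable d : nat.

Definition pt_row (p : pt d) : 'rV[int]_d.+1 :=
  \row_j match unlift ord_max j with Some k => p.1 0 k | None => p.2 end.

Lemma pt_row_inj : injective pt_row.
Proof.
move=> [p1 p2] [q1 q2] /rowP eq_pq; congr pair.
  by apply/rowP => k; have := eq_pq (lift ord_max k); rewrite !mxE liftK.
by have := eq_pq ord_max; rewrite !mxE unlift_none.
Qed.

Lemma pt_rowB p q : pt_row (p - q) = pt_row p - pt_row q.
Proof.
by apply/rowP => j; rewrite !mxE; case: unlift => //= k; rewrite !mxE.
Qed.

Lemma pt_row_last p : pt_row p 0 ord_max = p.2.
Proof. by rewrite mxE unlift_none. Qed.

Lemma row_lift_mx (v : 'I_d.+1 -> 'rV[int]_d) i :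
  row i (lift_mx v) = pt_row (lift_pt (v i)).
Proof. by apply/rowP => j; rewrite !mxE. Qed.

Lemma pt_row_word s : pt_row (word_pt s) = \sum_(a <- s) pt_row (lift_pt a).
Proof.
elim: s => [|a s IH].
  apply/rowP => j; rewrite /word_pt !big_nil !mxE.
  by case: unlift => // k; rewrite mxE.
rewrite big_cons -IH; apply/rowP => j; rewrite /word_pt !mxE big_cons.
by case: unlift => [k|] /=; rewrite ?mxE // -add1n PoszD.
Qed.

Lemma pt_row_mult_word (v : 'I_d.+1 -> 'rV[int]_d) (n : 'I_d.+1 -> nat) :
  pt_row (word_pt (mult_word v n)) = \row_i (n i)%:Z *m lift_mx v.
Proof.
rewrite pt_row_word big_mult_word mulmx_sum_row.
by apply: eq_bigr => i _; rewrite row_lift_mx mxE -natz scaler_nat.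
Qed.

End Rows.

Section Simplex.
Variables (d : nat) (v : 'I_d.+1 -> 'rV[int]_d).
Local Notation L := (lift_mx v).
Local Notation toQ := (map_mx (intr : int -> rat)).

Lemma in_hull_coords a : in_hull v a ->
  exists2 lam : 'rV[rat]_d.+1, (forall i, 0 <= lam 0 i) &
    toQ (pt_row (lift_pt a)) = lam *m toQ L.
Proof.
move=> [lam [lam_ge0 [lam_sum1 def_a]]]; exists (\row_i lam i) => [i|].
  by rewrite mxE.
apply/rowP => j; rewrite !mxE; case: (unliftP ord_max j) => [k ->|->].
  have := congr1 (fun a : 'rV[rat]_d => a 0 k) def_a.
  rewrite !mxE summxE => ->; apply: eq_bigr => i _.
  by rewrite !mxE liftK.
transitivity (\sum_i lam i); first by rewrite lam_sum1.
by apply: eq_bigr => i _; rewrite !mxE unlift_none mulr1.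
Qed.

Lemma hull_word_coords s : {in s, forall a, in_hull v a} ->
  exists2 lam : 'rV[rat]_d.+1, (forall i, 0 <= lam 0 i) &
    toQ (pt_row (word_pt s)) = lam *m toQ L.
Proof.
rewrite pt_row_word; elim: s => [|a s IH] s_hull.
  by exists 0 => [i|]; rewrite ?big_nil ?mul0mx ?map_mx0 ?mxE.
have [|lam lam_ge0 def_s] := IH.
  by move=> b sb; apply: s_hull; rewrite inE sb orbT.
have [|mu mu_ge0 def_a] := in_hull_coords (s_hull a _).
  by rewrite inE eqxx.
exists (mu + lam) => [i|]; first by rewrite mxE addr_ge0.
by rewrite big_cons map_mxD def_s def_a mulmxDl.
Qed.

Lemma hull_word_lattice_coords_ge0 s c :
  affinely_independent v -> {in s, forall a, in_hull v a} ->
  pt_row (word_pt s) = c *m L -> forall i, 0 <= c 0 i.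
Proof.
move=> v_indep /hull_word_coords [lam lam_ge0 def_s] def_c i.
have uL : toQ L \in unitmx by rewrite unitmxE det_map_mx unitfE intr_eq0.
have /rowP/(_ i) : toQ c = lam.
  by apply: (can_inj (mulmxK uL)); rewrite /= -map_mxM -def_c.
by rewrite mxE -(ler0z rat) => ->.
Qed.

Lemma lattice_coords_sum s c :
  pt_row (word_pt s) = c *m L -> \sum_i c 0 i = (size s)%:Z.
Proof.
move=> def_c; rewrite -[RHS](pt_row_last (word_pt s)) def_c mxE.
by apply: eq_bigr => i _; rewrite mxE unlift_none mulr1.
Qed.

Lemma word_sub_vertex s c i : pt_row (word_pt s) = c *m L ->
  (forall l, 0 <= c 0 l) -> 0 < c 0 i ->
  word_pt s - lift_pt (v i) =
    word_pt (mult_word v (fun l => absz (c 0 l - (l == i)%:R)%R)).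
Proof.
move=> def_c c_ge0 c_i_gt0; apply: pt_row_inj.
rewrite pt_row_mult_word pt_rowB def_c -row_lift_mx rowE -mulmxBl.
congr (_ *m _); apply/rowP => l; rewrite !mxE abszE ger0_norm // subr_ge0.
by case: eqP => [->|_]; rewrite ?lez_addr1 ?c_ge0.
Qed.

End Simplex.

Lemma long_word_sub_vertex_in_cone d (A : seq 'rV[int]_d)
    (v : 'I_d.+1 -> 'rV[int]_d) s :
  hull_is_simplex A v -> all (mem A) s -> (`|\det (lift_mx v)| <= size s)%N ->
  exists i, in_cone A (word_pt s - lift_pt (v i)).
Proof.
move=> [v_indep [vA A_hull]] sA long.
have [s1 [s2 [s3 [c [def_s s2_gt0 s2_c]]]]] :=
  long_seq_row_lattice_factor (fun a => pt_row (lift_pt a)) v_indep long.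
rewrite -pt_row_word in s2_c.
have s2_hull : {in s2, forall a, in_hull v a}.
  by move=> a s2a; apply/A_hull/(allP sA); rewrite def_s !mem_cat s2a orbT.
have c_ge0 := hull_word_lattice_coords_ge0 v_indep s2_hull s2_c.
have [i c_i_gt0] : exists i, 0 < c 0 i.
  apply/existsP; apply: contraTT s2_gt0 => /existsPn c_le0.
  rewrite -ltz_nat -(lattice_coords_sum s2_c) -leNgt.
  by apply: sumr_le0 => l _; rewrite leNgt c_le0.
exists i; apply/in_coneP.
exists (s1 ++ s3 ++ mult_word v (fun l => absz (c 0 l - (l == i)%:R)%R)).
  move: sA; rewrite def_s !all_cat => /and3P [-> _ ->] /=.
  exact: all_mult_word.
rewrite def_s !word_pt_cat -(word_sub_vertex s2_c c_ge0 c_i_gt0).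
by rewrite [word_pt s2 + _]addrC !addrA.
Qed.

Theorem lemma3p1 (d : nat) (A : seq 'rV[int]_d) (v : 'I_d.+1 -> 'rV[int]_d)
  (hgen : diff_generates A) (hsimp : hull_is_simplex A v)
  (pi : 'rV[int]_d * int) (alpha : 'rV[int]_d) (M : int) :
  minimal_S A v pi (alpha, M) -> M <= normalized_volume v - 1.
Proof.
move=> [[/in_coneP [s sA def_p] _] minimal].
have -> : M = (size s)%:Z by case: def_p.
rewrite /normalized_volume lerBrDr -(PoszD _ 1) lez_nat addn1 ltnNge.
apply/negP => /(long_word_sub_vertex_in_cone hsimp sA) [i].
by rewrite -def_p; apply: minimal.
Qed.
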